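(* For every $n$ with $2\le n\le\infty$, the single identity $xyx\approx yx^2$ is a finite identity basis for the stalactic monoid $\mathrm{stal}_n$ and for the taiga monoid $\mathrm{taig}_n$. Consequently, all stalactic and taiga monoids of rank at least $2$ (including rank $\infty$) are equationally equivalent, i.e. satisfy exactly the same identities.
   Context: Let $\mathcal{A}=\{1<2<3<\cdots\}$ and $\mathcal{A}_n=\{1<\cdots<n\}$; write $\mathcal{A}_\infty=\mathcal{A}$. A stalactic tableau is a finite array of symbols of $\mathcal{A}$ whose columns are top-aligned and in which two symbols lie in the same column iff they are equal. Inserting $a$ into a stalactic tableau $T$: if $a$ does not appear in $T$, add $a$ as a new column at the left end of the top row; otherwise append $a$ at the bottom of the column containing $a$. A binary search tree with multiplicities is a binary tree with pairwise distinct labels from $\mathcal{A}$ (each label greater than all labels in its left subtree and less than all labels in its right subtree) with a positive integer multiplicity attached to each node. Inserting $a$ into such a tree $T$: if $T$ is empty, create a node labelled $a$ with multiplicity $1$; otherwise, with root label $x$, recursively insert into the left subtree if $a<x$, into the right subtree if $a>x$, and increase the multiplicity of the root by $1$ if $a=x$. For a word $w=w_1\cdots w_k\in\mathcal{A}^*$, $\mathrm{P}_{\mathrm{stal}}(w)$ (resp. $\mathrm{P}_{\mathrm{taig}}(w)$) is obtained from the empty tableau (resp. empty tree) by inserting $w_k,w_{k-1},\dots,w_1$ in this order (reading $w$ right to left). The relation $u\equiv v \iff \mathrm{P}(u)=\mathrm{P}(v)$ is a congruence on $\mathcal{A}^*$; $\mathrm{stal}_n$ (resp. $\mathrm{taig}_n$)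 is the quotient monoid $\mathcal{A}_n^*/{\equiv}$ for the stalactic (resp. taiga) insertion, $2\le n\le\infty$. Identities: $\mathcal{X}$ is a countably infinite alphabet; an identity is $\mathbf{u}\approx\mathbf{v}$ with $\mathbf{u},\mathbf{v}\in\mathcal{X}^*$; a monoid $S$ satisfies it if $\varphi(\mathbf{u})=\varphi(\mathbf{v})$ for all maps $\varphi:\mathcal{X}\to S$ (extended to monoid homomorphisms). $\mathbf{u}\approx\mathbf{v}$ is derived from a set $\Sigma$ if there is a sequence $\mathbf{u}=\mathbf{u}_1,\dots,\mathbf{u}_n=\mathbf{v}$ with $\mathbf{u}_i=\mathbf{a}\varphi(\mathbf{p})\mathbf{b}$, $\mathbf{u}_{i+1}=\mathbf{a}\varphi(\mathbf{q})\mathbf{b}$ for some words $\mathbf{a},\mathbf{b}$, an endomorphism $\varphi$ of $\mathcal{X}^*$, and $\mathbf{p}\approx\mathbf{q}\in\Sigma$. A finite identity basis for $S$ is a finite set $\Sigma$ of identities satisfied by $S$ from which every identity satisfied by $S$ is derived. *)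

From mathcomp Require Import all_boot.
From Stdlib Require Import ClassicalEpsilon.
Set Implicit Arguments. Unset Strict Implicit. Unset Printing Implicit Defensive.

(* Letters of A are the positive naturals 1 < 2 < 3 < ...
   A rank is [Some k] for A_k = {1,...,k}, or [None] for A_infinity = A. *)
Definition rank := option nat.

Definition in_alph (n : rank) (a : nat) : bool :=
  (0 < a) && (if n is Some k then a <= k else true).

Definition rank_ge2 (n : rank) : Prop :=
  match n with Some k => 2 <= k | None => True end.

(* A stalactic tableau is the list of its columns from left to right; a
   column is recorded as (symbol, number of copies of that symbol). *)
Definition stal_tableau := seq (nat * nat).

Fixpoint bump_col (a : nat) (T : stal_tableau) : stal_tableau :=
  match T with
  | [::] => [::]
  | (b, k) :: T' => if b == a then (b, k.+1) :: T' else (b, k) :: bump_col a T'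
  end.

Definition stal_insert (a : nat) (T : stal_tableau) : stal_tableau :=
  if a \in map fst T then bump_col a T else (a, 1) :: T.

Definition P_stal (w : seq nat) : stal_tableau := foldr stal_insert [::] w.

(* Binary search trees with multiplicities: Node left label multiplicity right *)
Inductive bstm : Type :=
| Leaf : bstm
| Node : bstm -> nat -> nat -> bstm -> bstm.

Fixpoint taig_insert (a : nat) (T : bstm) : bstm :=
  match T with
  | Leaf => Node Leaf a 1 Leaf
  | Node l x m r =>
      if a < x then Node (taig_insert a l) x m r
      else if x < a then Node l x m (taig_insert a r)
      else Node l x m.+1 r
  end.

Definition P_taig (w : seq nat) : bstm := foldr taig_insert Leaf w.

Record monoid := Monoid { mcar : Type; mmul : mcar -> mcar -> mcar; mone : mcar }.

(* Variables X = nat (countably infinite); words over X are seq nat. *)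
Definition meval (M : monoid) (phi : nat -> mcar M) (w : seq nat) : mcar M :=
  foldr (fun x acc => mmul (phi x) acc) (mone M) w.

Definition satisfies (M : monoid) (u v : seq nat) : Prop :=
  forall phi : nat -> mcar M, meval phi u = meval phi v.

Definition subst (phi : nat -> seq nat) (w : seq nat) : seq nat :=
  flatten (map phi w).

Definition der_step (Sigma : seq (seq nat * seq nat)) (u v : seq nat) : Prop :=
  exists (a b p q : seq nat) (phi : nat -> seq nat),
    ((p, q) \in Sigma \/ (q, p) \in Sigma) /\
    u = a ++ subst phi p ++ b /\ v = a ++ subst phi q ++ b.

Inductive derivable (Sigma : seq (seq nat * seq nat)) : seq nat -> seq nat -> Prop :=
| der_refl u : derivable Sigma u u
| der_cons u v w : der_step Sigma u v -> derivable Sigma v w -> derivable Sigma u w.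

Definition identity_basis (M : monoid) (Sigma : seq (seq nat * seq nat)) : Prop :=
  (forall p q, (p, q) \in Sigma -> satisfies M p q) /\
  (forall u v, satisfies M u v -> derivable Sigma u v).

(* The classes of the congruence u == v <-> P u = P v on A_n^* are in
   bijection with the values P w, w in A_n^*; the product of two classes is
   the class of the concatenation of (chosen) representatives. *)
Definition qcar (K : Type) (P : seq nat -> K) (n : rank) : Type :=
  {T : K | exists w, all (in_alph n) w /\ P w = T}.

Definition qrep K (P : seq nat -> K) n (T : qcar P n) : seq nat :=
  proj1_sig (constructive_indefinite_description _ (proj2_sig T)).

Lemma qrep_spec K (P : seq nat -> K) n (T : qcar P n) :
  all (in_alph n) (qrep T) /\ P (qrep T) = proj1_sig T.
Proof. exact: (proj2_sig (constructive_indefinite_description _ (proj2_sig T))). Qed.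

Definition qmul K (P : seq nat -> K) n (T1 T2 : qcar P n) : qcar P n.
Proof.
refine (exist _ (P (qrep T1 ++ qrep T2)) _).
exists (qrep T1 ++ qrep T2); split=> //.
by rewrite all_cat (proj1 (qrep_spec T1)) (proj1 (qrep_spec T2)).
Defined.

Definition qone K (P : seq nat -> K) n : qcar P n :=
  exist _ (P [::]) (ex_intro _ [::] (conj erefl erefl)).

Definition quot_monoid K (P : seq nat -> K) (n : rank) : monoid :=
  @Monoid (qcar P n) (@qmul K P n) (@qone K P n).

Definition stal (n : rank) : monoid := quot_monoid P_stal n.
Definition taig (n : rank) : monoid := quot_monoid P_taig n.

(* The identity x y x = y x^2, with variables x = 0, y = 1. *)
Definition xyx_basis : seq (seq nat * seq nat) := [:: ([:: 0; 1; 0], [:: 1; 0; 0])].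

From mathcomp Require Import all_boot.
From Stdlib Require Import ProofIrrelevance.
Set Implicit Arguments. Unset Strict Implicit. Unset Printing Implicit Defensive.

(* Both insertions are right-to-left folds [foldr ins e] in which inserting a letter
   that is already present commutes with any other insertion.  Once X has been
   inserted, the insertions of Y and of a second copy of X therefore commute, so
   P (A X Y X B) = P (A Y X X B) and both monoids satisfy xyx = yxx.
   Conversely, xyx = yxx moves an occurrence of a letter rightwards next to a later
   occurrence of it, so every word is equivalent to its normal form [xyx_nf u], in which
   the occurrences of each letter form one block and the blocks are ordered by last
   occurrence.  A normal form is determined by its projections onto all pairs of
   letters {x, y}, and on words over {1, 2} both insertions recover the normal form.
   Substituting 1 for x, 2 for y and the empty word for every other letter thus shows
   that an identity of rank 2 already forces equal normal forms. *)

Section Derivations.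
Variable Sigma : seq (seq nat * seq nat).

Lemma derivable_trans u v w :
  derivable Sigma u v -> derivable Sigma v w -> derivable Sigma u w.
Proof. by elim=> // u1 v1 w1 st _ IH /IH; apply: der_cons. Qed.

Lemma der_step_sym u v : der_step Sigma u v -> der_step Sigma v u.
Proof.
by case=> [a [b [p [q [phi [Hpq [-> ->]]]]]]]; exists a, b, q, p, phi; split; [tauto|].
Qed.

Lemma derivable_sym u v : derivable Sigma u v -> derivable Sigma v u.
Proof.
elim=> [u0|u1 v1 w1 /der_step_sym st _ IH]; first exact: der_refl.
exact: derivable_trans IH (der_cons st (der_refl _ _)).
Qed.

Lemma derivable_catl c u v : derivable Sigma u v -> derivable Sigma (c ++ u) (c ++ v).
Proof.
elim=> [u0|u1 v1 w1 [a [b [p [q [phi [Hpq [-> ->]]]]]]] _ IH]; first exact: der_refl.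
by apply: der_cons IH; exists (c ++ a), b, p, q, phi; rewrite !catA.
Qed.

End Derivations.

Lemma subst_cat psi u v : subst psi (u ++ v) = subst psi u ++ subst psi v.
Proof. by rewrite /subst map_cat flatten_cat. Qed.

Lemma subst3 psi i j k : subst psi [:: i; j; k] = psi i ++ psi j ++ psi k.
Proof. by rewrite /subst /= cats0. Qed.

Lemma eq_subst psi1 psi2 : psi1 =1 psi2 -> subst psi1 =1 subst psi2.
Proof. by move=> E w; rewrite /subst (eq_map E). Qed.

Fixpoint dup_first (a : nat) (s : seq nat) : seq nat :=
  if s is b :: s' then if b == a then a :: s else b :: dup_first a s' else [::].

Fixpoint xyx_nf (u : seq nat) : seq nat :=
  if u is a :: w then
    if a \in w then dup_first a (xyx_nf w) else a :: xyx_nf w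
  else [::].

Lemma dup_firstP a s : a \in s ->
  exists s1 s2, s = s1 ++ a :: s2 /\ dup_first a s = s1 ++ a :: a :: s2.
Proof.
elim: s => //= b s IH; case: eqP => [-> _|ba]; first by exists [::], s.
rewrite in_cons => /orP[/eqP ab|/IH [s1 [s2 [-> ->]]]]; first by case: ba.
by exists (b :: s1), s2.
Qed.

Lemma perm_dup_first a s : a \in s -> perm_eq (dup_first a s) (a :: s).
Proof. by case/dup_firstP=> s1 [s2 [-> ->]]; rewrite -cat1s perm_catCA. Qed.

Lemma perm_xyx_nf u : perm_eq (xyx_nf u) u.
Proof.
elim: u => //= a w IH; case: ifP => aw; last by rewrite perm_cons.
by apply: perm_trans (perm_dup_first _) _; rewrite ?perm_cons ?(perm_mem IH).
Qed.

Lemma der_step_dup_first a s : a \in s -> der_step xyx_basis (a :: s) (dup_first a s).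
Proof.
case/dup_firstP=> s1 [s2 [-> ->]].
exists [::], s2, [:: 0; 1; 0], [:: 1; 0; 0], (fun i => if i == 0 then [:: a] else s1).
by rewrite !subst3 inE eqxx -!catA; split; [left|].
Qed.

Lemma derivable_xyx_nf u : derivable xyx_basis u (xyx_nf u).
Proof.
elim: u => [|a w IH] /=; first exact: der_refl.
apply: derivable_trans (derivable_catl [:: a] IH) _; case: ifP => aw; last exact: der_refl.
by apply: der_cons (der_refl _ _); apply: der_step_dup_first; rewrite (perm_mem (perm_xyx_nf w)).
Qed.

Lemma xyx_nf_derivable u v : xyx_nf u = xyx_nf v -> derivable xyx_basis u v.
Proof.
move=> E; apply: derivable_trans (derivable_xyx_nf u) _.
by rewrite E; apply: derivable_sym (derivable_xyx_nf v).
Qed.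

Lemma filter_dup_first (p : pred nat) a s :
  filter p (dup_first a s) = if p a then dup_first a (filter p s) else filter p s.
Proof.
elim: s => [|b s IH] /=; first by case: (p a).
case: (eqVneq b a) => [->|ba] /=; first by case pa: (p a) => /=; rewrite ?pa ?eqxx.
by rewrite IH; case pa: (p a); case pb: (p b) => //=; rewrite (negbTE ba).
Qed.

Lemma xyx_nf_filter (p : pred nat) u : xyx_nf (filter p u) = filter p (xyx_nf u).
Proof.
elim: u => //= a w IH; case pa: (p a) => /=; rewrite ?mem_filter ?pa IH /=;
  by case: ifP => _; rewrite ?filter_dup_first /= ?pa.
Qed.

Lemma map_dup_first (f : nat -> nat) a s :
  injective f -> map f (dup_first a s) = dup_first (f a) (map f s).
Proof.
by move=> injf; elim: s => //= b s IH; rewrite inj_eq //; case: eqP => [->|_]; rewrite //= IH.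
Qed.

Lemma xyx_nf_map (f : nat -> nat) u : injective f -> xyx_nf (map f u) = map f (xyx_nf u).
Proof.
move=> injf; elim: u => //= a w IH.
by rewrite mem_map // IH; case: ifP; rewrite ?map_dup_first.
Qed.

Lemma eq_from_pair_filters (s t : seq nat) :
  (forall x y, filter (pred2 x y) s = filter (pred2 x y) t) -> s = t.
Proof.
elim: s t => [|a s IH] [|b t] E //.
- by have := E b b; rewrite /= eqxx.
- by have := E a a; rewrite /= eqxx.
have := E a b; rewrite /= !eqxx orbT /= => -[ab _]; subst b; congr (_ :: _).
by apply: IH => x y; have := E x y; rewrite /=; case: ifP => // _ [].
Qed.

(* Letters other than x and y are moved past 1 and 2 only to make the renaming injective. *)
Definition rename12 (x y z : nat) : nat := if z == x then 1 else if z == y then 2 else z.+3.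

Lemma rename12_inj x y : injective (rename12 x y).
Proof.
move=> a b; rewrite /rename12.
have [-> | ax] := eqVneq a x; have [-> | bx] := eqVneq b x; rewrite ?eqxx //; try by case: ifP.
by have [-> | ay] := eqVneq a y; have [-> | b_y] := eqVneq b y => // -[].
Qed.

Definition proj12 (x y z : nat) : seq nat := if pred2 x y z then [:: rename12 x y z] else [::].

Lemma proj12_in12 x y z : all (mem [:: 1; 2]) (proj12 x y z).
Proof. by rewrite /proj12 /rename12; case: ifP => //=; case: ifP => //; case: ifP. Qed.

Lemma subst_proj12 x y w : subst (proj12 x y) w = map (rename12 x y) (filter (pred2 x y) w).
Proof.
elim: w => //= z w IH; rewrite /subst /= -/(subst _ w) IH /proj12 /=.
by case: (_ || _).
Qed.

Lemma in_alph12 n a : rank_ge2 n -> a \in [:: 1; 2] -> in_alph n a.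
Proof.
by case: n => [k|] k2; rewrite !inE => /orP[] /eqP->; rewrite /in_alph //= ltnW.
Qed.

Section FoldQuotient.
Variables (K : Type) (ins : nat -> K -> K) (e : K) (n : rank).
Local Notation P := (foldr ins e).
Local Notation M := (quot_monoid P n).

Variable present : nat -> K -> bool.
Hypothesis present_ins : forall a b T, present b T -> present b (ins a T).
Hypothesis present_ins_self : forall a T, present a (ins a T).
Hypothesis ins_comm : forall a b T, present b T -> ins a (ins b T) = ins b (ins a T).

Variable read : K -> seq nat.
Hypothesis perm_read : forall w, perm_eq (read (P w)) w.
Hypothesis read12 : forall w, all (mem [:: 1; 2]) w -> read (P w) = xyx_nf w.

Lemma present_foldr Y b T : present b T -> present b (foldr ins T Y).
Proof. by elim: Y => //= c Y IH /IH; apply: present_ins. Qed.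

Lemma present_foldr_self X T : all (present^~ (foldr ins T X)) X.
Proof.
elim: X => //= b X IH; rewrite present_ins_self.
by apply/allP => c /(allP IH); apply: present_ins.
Qed.

Lemma ins_foldr_comm Y b T : present b T -> ins b (foldr ins T Y) = foldr ins (ins b T) Y.
Proof. by move=> bT; elim: Y => //= c Y <-; rewrite (ins_comm c) ?present_foldr. Qed.

Lemma foldr_comm X Y T : all (present^~ T) X ->
  foldr ins (foldr ins T Y) X = foldr ins (foldr ins T X) Y.
Proof.
elim: X => //= b X IH /andP[bT XT].
by rewrite IH // ins_foldr_comm // present_foldr.
Qed.

Lemma foldr_xyx A X Y B : P (A ++ X ++ Y ++ X ++ B) = P (A ++ Y ++ X ++ X ++ B).
Proof. by rewrite !foldr_cat; congr foldr; apply/foldr_comm/present_foldr_self. Qed.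

Lemma derivable_foldr_subst u v : derivable xyx_basis u v ->
  forall psi, P (subst psi u) = P (subst psi v).
Proof.
elim=> // u1 v1 w1 [a [b [p [q [phi [Hpq [-> ->]]]]]]] _ IH psi.
rewrite -IH !subst_cat; have [|] := Hpq; rewrite inE => /eqP[-> ->];
  by rewrite !subst3 !subst_cat -!catA foldr_xyx.
Qed.

Lemma qcar_eq (T1 T2 : qcar P n) : sval T1 = sval T2 -> T1 = T2.
Proof.
move: T1 T2; rewrite /qcar => -[T1 p1] [T2 p2] /= E; subst T2.
by rewrite (proof_irrelevance _ p1 p2).
Qed.

Lemma meval_quot (phi : nat -> qcar P n) w :
  sval (@meval M phi w) = P (subst (fun x => qrep (phi x)) w).
Proof.
elim: w => //= x w IH; rewrite /subst /= -/(subst _ w) !foldr_cat -IH.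
by rewrite (proj2 (qrep_spec (@meval M phi w))).
Qed.

Lemma satisfies_quot u v : (forall psi, P (subst psi u) = P (subst psi v)) -> satisfies M u v.
Proof. by move=> E phi; apply: qcar_eq; rewrite !meval_quot. Qed.

Lemma foldr_inj_small w s : size s <= 1 -> P w = P s -> w = s.
Proof.
move=> s1 E; apply: perm_small_eq s1 _.
by have := perm_read w; rewrite E perm_sym => /perm_trans; apply.
Qed.

Lemma satisfies_quot_small_subst u v psi : satisfies M u v ->
  (forall z, size (psi z) <= 1 /\ all (in_alph n) (psi z)) ->
  P (subst psi u) = P (subst psi v).
Proof.
move=> uv psiP.
pose phi z : qcar P n := exist _ (P (psi z)) (ex_intro _ (psi z) (conj (proj2 (psiP z)) erefl)).
(* A word of length at most one is the only representative of its class. *)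
have qrep_phi z : qrep (phi z) = psi z.
  by apply: foldr_inj_small (proj1 (psiP z)) _; rewrite (proj2 (qrep_spec (phi z))).
by rewrite -!(eq_subst qrep_phi) -!meval_quot uv.
Qed.

Lemma satisfies_quot_xyx_nf u v : rank_ge2 n -> satisfies M u v -> xyx_nf u = xyx_nf v.
Proof.
move=> n2 uv; apply: eq_from_pair_filters => x y; apply: (inj_map (@rename12_inj x y)).
have in12 w : all (mem [:: 1; 2]) (subst (proj12 x y) w).
  by elim: w => //= z w IH; rewrite /subst /= -/(subst _ w) all_cat proj12_in12.
rewrite -!xyx_nf_filter -!(xyx_nf_map _ (@rename12_inj x y)) -!subst_proj12 -!read12 //.
rewrite (satisfies_quot_small_subst uv) // => z; split; first by rewrite /proj12; case: ifP.
by apply: sub_all (proj12_in12 x y z) => a; apply: in_alph12.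
Qed.

Lemma satisfies_quot_xyx_nfE u v :
  rank_ge2 n -> satisfies M u v <-> xyx_nf u = xyx_nf v.
Proof.
move=> n2; split; first exact: satisfies_quot_xyx_nf.
by move/xyx_nf_derivable/derivable_foldr_subst/satisfies_quot.
Qed.

End FoldQuotient.

Definition stal_read (T : stal_tableau) : seq nat := flatten [seq nseq c.2 c.1 | c <- T].

Lemma stal_read_cat S T : stal_read (S ++ T) = stal_read S ++ stal_read T.
Proof. by rewrite /stal_read map_cat flatten_cat. Qed.

Lemma stal_read_cons c T : stal_read (c :: T) = nseq c.2 c.1 ++ stal_read T.
Proof. by []. Qed.

Lemma fst_bump_col a T : map fst (bump_col a T) = map fst T.
Proof. by elim: T => //= -[b k] T IH /=; case: eqP => //= _; rewrite IH. Qed.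

Lemma stal_present_insert a b T : b \in map fst T -> b \in map fst (stal_insert a T).
Proof. by rewrite /stal_insert; case: ifP => _; rewrite ?fst_bump_col // inE orbC => ->. Qed.

Lemma stal_present_insert_self a T : a \in map fst (stal_insert a T).
Proof. by rewrite /stal_insert; case: ifP => aT; rewrite ?fst_bump_col //= inE eqxx. Qed.

Lemma bump_colC a b T : bump_col a (bump_col b T) = bump_col b (bump_col a T).
Proof.
elim: T => //= -[c k] T IH.
case: (eqVneq c b) => [->|cb]; case: (eqVneq c a) => [ca|ca]; subst => /=;
  rewrite ?eqxx ?(negbTE cb) ?(negbTE ca) ?IH //.
all: by case: (eqVneq b a) => [->|ba]; rewrite /= ?eqxx ?(negbTE ba).
Qed.

Lemma stal_insertC a b T : b \in map fst T ->
  stal_insert a (stal_insert b T) = stal_insert b (stal_insert a T).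
Proof.
move=> bT; rewrite /stal_insert bT fst_bump_col; case: ifP => aT.
  by rewrite fst_bump_col bT bump_colC.
rewrite /= inE bT orbT /=; case: eqP => // ab.
by rewrite ab bT in aT.
Qed.

Lemma fst_P_stal w : map fst (P_stal w) =i w.
Proof.
elim: w => //= b w IH a; rewrite in_cons -IH /stal_insert.
by case: ifP => [bP|_]; rewrite ?fst_bump_col ?in_cons //; case: eqP => // ->.
Qed.

Lemma bump_col_pos a T : all (fun c => 0 < c.2) T -> all (fun c => 0 < c.2) (bump_col a T).
Proof. by elim: T => //= -[c k] T IH /andP[k0 T0]; case: eqP => _; rewrite /= ?k0 ?T0 ?IH. Qed.

Lemma P_stal_pos w : all (fun c => 0 < c.2) (P_stal w).
Proof. by elim: w => //= b w IH; rewrite /stal_insert; case: ifP => _; rewrite ?bump_col_pos. Qed.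

Lemma stal_read_bump_col a T : a \in map fst T -> all (fun c => 0 < c.2) T ->
  stal_read (bump_col a T) = dup_first a (stal_read T).
Proof.
elim: T => //= -[b k] T IH; rewrite inE /= => aT /andP[k0 T0].
rewrite !stal_read_cons; case: (eqVneq b a) => [->|ba].
  by case: k k0 => //= k _; rewrite eqxx.
rewrite stal_read_cons IH //; last by rewrite eq_sym (negbTE ba) in aT.
by elim: k {k0} => //= k ->; rewrite (negbTE ba).
Qed.

Lemma stal_read_P_stal w : stal_read (P_stal w) = xyx_nf w.
Proof.
elim: w => //= b w IH; rewrite /stal_insert fst_P_stal -IH.
by case: ifP => bw //; rewrite stal_read_bump_col ?fst_P_stal ?P_stal_pos.
Qed.

Lemma satisfies_stalE n u v :
  rank_ge2 n -> satisfies (stal n) u v <-> xyx_nf u = xyx_nf v.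
Proof.
apply: (satisfies_quot_xyx_nfE stal_present_insert stal_present_insert_self stal_insertC
  (read := stal_read)) => w; rewrite [stal_read _]stal_read_P_stal //.
exact: perm_xyx_nf.
Qed.

Fixpoint taig_present (b : nat) (T : bstm) : bool :=
  if T is Node l x _ r then
    if b < x then taig_present b l else if x < b then taig_present b r else true
  else false.

Lemma taig_insert_lt a l x m r :
  a < x -> taig_insert a (Node l x m r) = Node (taig_insert a l) x m r.
Proof. by move=> /= ->. Qed.

Lemma taig_insert_gt a l x m r :
  x < a -> taig_insert a (Node l x m r) = Node l x m (taig_insert a r).
Proof. by move=> xa /=; rewrite ltnNge (ltnW xa) /= xa. Qed.

Lemma taig_insert_eq l x m r : taig_insert x (Node l x m r) = Node l x m.+1 r.
Proof. by rewrite /= ltnn. Qed.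

Lemma taig_present_insert a b T : taig_present b T -> taig_present b (taig_insert a T).
Proof.
elim: T => //= l IHl x m r IHr.
by case: (ltngtP a x) => _ /=; case: (ltngtP b x) => _ //; auto.
Qed.

Lemma taig_present_insert_self a T : taig_present a (taig_insert a T).
Proof.
elim: T => [|l IHl x m r IHr] /=; first by rewrite ltnn.
by case: (ltngtP a x) => [ax|xa|->]; rewrite ?taig_insert_lt ?taig_insert_gt ?taig_insert_eq
  //= ?ax ?xa ?ltnn // ltnNge ltnW.
Qed.

Lemma taig_insertC a b T : taig_present b T ->
  taig_insert a (taig_insert b T) = taig_insert b (taig_insert a T).
Proof.
elim: T => //= l IHl x m r IHr.
case: (ltngtP b x) => Hb; case: (ltngtP a x) => Ha H; subst;
  rewrite ?(taig_insert_lt _ _ _ Ha) ?(taig_insert_gt _ _ _ Ha) ?(taig_insert_lt _ _ _ Hb)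
    ?(taig_insert_gt _ _ _ Hb) ?taig_insert_eq ?(taig_insert_lt _ _ _ Ha)
    ?(taig_insert_gt _ _ _ Ha) ?(taig_insert_lt _ _ _ Hb) ?(taig_insert_gt _ _ _ Hb)
    ?taig_insert_eq ?IHl ?IHr //.
Qed.

Fixpoint taig_tableau (T : bstm) : stal_tableau :=
  if T is Node l x m r then taig_tableau l ++ taig_tableau r ++ [:: (x, m)] else [::].

Definition taig_read (T : bstm) : seq nat := stal_read (taig_tableau T).

Lemma taig_read_node l x m r :
  taig_read (Node l x m r) = taig_read l ++ taig_read r ++ nseq m x.
Proof. by rewrite /taig_read /= !stal_read_cat stal_read_cons cats0. Qed.

Lemma count_taig_read_insert (p : pred nat) a T :
  count p (taig_read (taig_insert a T)) = p a + count p (taig_read T).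
Proof.
elim: T => [|l IHl x m r IHr]; first by rewrite /= addn0.
case: (ltngtP a x) => [ax|xa|<-].
- by rewrite taig_insert_lt // !taig_read_node !count_cat IHl -addnA.
- by rewrite taig_insert_gt // !taig_read_node !count_cat IHr -addnA addnCA.
- by rewrite taig_insert_eq !taig_read_node !count_cat /= [_ + (p a + _)]addnCA addnCA.
Qed.

Lemma perm_taig_read w : perm_eq (taig_read (P_taig w)) w.
Proof.
apply/permP => p; elim: w => //= a w IH.
by rewrite count_taig_read_insert -IH.
Qed.

Definition taig12_shape (T : bstm) : bool :=
  match T with
  | Leaf => true
  | Node Leaf x _ Leaf => x \in [:: 1; 2]
  | Node (Node Leaf y _ Leaf) x _ Leaf => (y == 1) && (x == 2)
  | Node Leaf x _ (Node Leaf y _ Leaf) => (x == 1) && (y == 2)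
  | _ => false
  end.

Lemma taig12_shape_insert a T : a \in [:: 1; 2] -> taig12_shape T ->
  taig12_shape (taig_insert a T) &&
  (taig_tableau (taig_insert a T) == stal_insert a (taig_tableau T)).
Proof.
move=> a12; case: T => [|l x m r]; first by rewrite /= a12 /stal_insert /= eqxx.
move: a12; rewrite !inE => a12.
case: l => [|[|? ? ? ?] y k [|? ? ? ?]]; case: r => [|[|? ? ? ?] z j [|? ? ? ?]] //=.
- rewrite !inE => x12.
  by move: a12 x12 => /orP[]/eqP-> /orP[]/eqP-> //=; rewrite /stal_insert /= !eqxx.
- by move=> /andP[/eqP-> /eqP->]; move: a12 => /orP[]/eqP-> //=; rewrite /stal_insert /= !eqxx.
- by move=> /andP[/eqP-> /eqP->]; move: a12 => /orP[]/eqP-> //=; rewrite /stal_insert /= !eqxx.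
Qed.

Lemma taig_tableau_P_taig12 w : all (mem [:: 1; 2]) w -> taig_tableau (P_taig w) = P_stal w.
Proof.
suff: all (mem [:: 1; 2]) w -> taig12_shape (P_taig w) && (taig_tableau (P_taig w) == P_stal w).
  by move=> H /H /andP[_ /eqP].
elim: w => //= a w IH /andP[a12 /IH /andP[shape /eqP <-]].
exact: taig12_shape_insert.
Qed.

Lemma satisfies_taigE n u v :
  rank_ge2 n -> satisfies (taig n) u v <-> xyx_nf u = xyx_nf v.
Proof.
apply: (satisfies_quot_xyx_nfE taig_present_insert taig_present_insert_self taig_insertC
  (read := taig_read)) => w; first exact: perm_taig_read.
by move=> w12; rewrite /taig_read [taig_tableau _]taig_tableau_P_taig12 // stal_read_P_stal.
Qed.

Lemma identity_basis_xyx (M : monoid) :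
  (forall u v, satisfies M u v <-> xyx_nf u = xyx_nf v) -> identity_basis M xyx_basis.
Proof.
move=> ME; split=> [p q|u v /ME /xyx_nf_derivable //].
by rewrite inE => /eqP[-> ->]; apply/ME.
Qed.

Theorem theorem4p2 :
  (forall n : rank, rank_ge2 n ->
     identity_basis (stal n) xyx_basis /\ identity_basis (taig n) xyx_basis) /\
  (forall n m : rank, rank_ge2 n -> rank_ge2 m ->
     forall u v : seq nat,
       (satisfies (stal n) u v <-> satisfies (stal m) u v) /\
       (satisfies (stal n) u v <-> satisfies (taig m) u v)).
Proof.
split=> [n n2 | n m n2 m2 u v].
  by split; apply: identity_basis_xyx => u v; rewrite ?satisfies_stalE ?satisfies_taigE.
by rewrite satisfies_stalE // satisfies_stalE // satisfies_taigE.
Qed.
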